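(* For every prime $p$ there exist $\varepsilon(p),\delta(p)\in(0,\infty)$ such that the following holds. Let $n\geq p^2$ be an integer and let $\varepsilon<\varepsilon(p)$. Then every $(C,\mathbf 1,\mathbb{F}_p^n,\varepsilon)$-arithmetic expander, where $C$ is the $p$-term arithmetic progression matrix, has size at least $\delta(p)\,n^{p-1}$. Concretely: if $D\subseteq\mathbb{F}_p^n$ is a multiset with $\lambda_{L_{\mathbb{F}_p^n}}(L_D)\leq\varepsilon$, then $|D|\geq\delta(p)\,n^{p-1}$ (with $|D|$ counted with multiplicity).
   Context: For a $t$-linear form $A$ on $\mathbb{R}^V$ and $r\in[1,\infty]$ let $\|A\|_{\ell_r,\dots,\ell_r}=\sup\{A(x[1],\dots,x[t])/(\|x[1]\|_{\ell_r}\cdots\|x[t]\|_{\ell_r}) : x[1],\dots,x[t]\in\mathbb{R}^V\setminus\{0\}\}$. For a nonempty multiset $D\subseteq\mathbb{F}_p^n$, let $L_D$ be the $p$-uniform hypergraph on vertex set $\mathbb{F}_p^n$ in which the multiplicity of the edge $\{u_1,\dots,u_p\}$ is $e_{L_D}(u_1,\dots,u_p)=\sum_{y\in D}\sum_{x\in\mathbb{F}_p^n}\sum_{\sigma\in S_p}\prod_{i=1}^p 1[u_i=x+(\sigma(i)-1)y]$ (sum over $D$ with multiplicity, $S_p$ the permutations of $\{1,\dots,p\}$). Its normalized adjacency form $A_{L_D}$ is the $p$-linear form on $\mathbb{R}^{\mathbb{F}_p^n}$ determined by $A_{L_D}(1_{\{u_1\}},\dots,1_{\{u_p\}})=e_{L_D}(u_1,\dots,u_p)/(p!\,|D|)$.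 For hypergraphs $H,K$ of this type set $\lambda_K(H)=\|A_H-A_K\|_{\ell_p,\dots,\ell_p}$. $L_{\mathbb{F}_p^n}$ denotes $L_D$ with $D=\mathbb{F}_p^n$ (every element once). The AP matrix $C\in\mathbb{Z}^{(p-2)\times p}$ has rows $(0,\dots,0,1,-2,1,0,\dots,0)$; its solution set in $(\mathbb{F}_p^n)^p$ consists of the $p$-term progressions $(x,x+y,\dots,x+(p-1)y)$, which are the cosets of the diagonal $\{(u,\dots,u)\}$ with representatives $(0,y,2y,\dots,(p-1)y)$; a $(C,\mathbf 1,\mathbb{F}_p^n,\varepsilon)$-arithmetic expander is a multiset of such representatives, i.e. indexed by a multiset $D$ of steps $y$, such that $\lambda_{L_{\mathbb{F}_p^n}}(L_D)\leq\varepsilon$; its size is $|D|$. *)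

From HB Require Import structures.
From mathcomp Require Import all_boot all_order all_algebra all_fingroup.
From mathcomp Require Import all_classical all_reals all_analysis.
Set Implicit Arguments. Unset Strict Implicit. Unset Printing Implicit Defensive.
Import Order.TTheory GRing.Theory Num.Theory.
Local Open Scope ring_scope.

Section Defs.
Variable R : realType.
Variables p n : nat.
Local Notation V := 'rV['F_p]_n.

(* A multiset D of elements of F_p^n, given by its multiplicity function;
   |D| counts multiplicity. *)
Definition ms_card (D : {ffun V -> nat}) : nat := (\sum_(y : V) D y)%N.

(* e_{L_D}(u_1,...,u_p), indices shifted to 'I_p = {0,...,p-1}, so that
   sigma(i)-1 becomes the value of sigma i. *)
Definition edge_mult (D : {ffun V -> nat}) (u : {ffun 'I_p -> V}) : nat :=
  (\sum_(y : V) D y * \sum_(x : V) \sum_(s : 'S_p)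
       \prod_(i < p) nat_of_bool (u i == (x + y *+ (s i : nat))%R))%N.

Definition AL (D : {ffun V -> nat}) (xs : 'I_p -> {ffun V -> R}) : R :=
  \sum_(u : {ffun 'I_p -> V})
     ((edge_mult D u)%:R / ((p`!)%:R * (ms_card D)%:R)) * \prod_(i < p) xs i (u i).

Definition lr_norm (r : R) (x : {ffun V -> R}) : R :=
  (\sum_(v : V) `|x v| `^ r) `^ (r^-1).

Definition lambdaK (K H : {ffun V -> nat}) : \bar R :=
  ereal_sup [set ((AL H xs - AL K xs) / \prod_(i < p) lr_norm p%:R (xs i))%:E
            | xs in [set xs : 'I_p -> {ffun V -> R} | forall i, xs i != 0]]%classic.

Definition full_ms : {ffun V -> nat} := [ffun => 1%N].
End Defs.

From HB Require Import structures.
From mathcomp Require Import all_boot all_order all_algebra all_fingroup.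
From mathcomp Require Import all_classical all_reals all_analysis.
From mathcomp Require Import finfield zify lra.
Set Implicit Arguments. Unset Strict Implicit. Unset Printing Implicit Defensive.
Import Order.TTheory GRing.Theory Num.Theory.
Local Open Scope ring_scope.

(* Put r = p - 1 and m = n / r, and fix r disjoint blocks of m coordinates.
   A polynomial Q on F_p^n combining the m^r monomials that take one variable
   from each block has degree p - 1, so its sum over any progression
   x, x + y, ..., x + (p-1)y is -Q(y).  If D had fewer than m^r distinct
   elements, some nonzero such Q would vanish on D; its r-fold finite
   difference along the variables of a monomial with nonzero coefficient is
   that coefficient, so Q is nonzero on at least a 2^(1-p) fraction of F_p^n.
   Test A_{L_D} - A_{L_{F_p^n}} on the indicators of the level sets
   {Q = c_1}, ..., {Q = c_p}: summed over all c with c_1 + ... + c_p = 0 the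
   values add up to |{Q <> 0}|, since a progression with step y is counted
   exactly when Q(y) = 0, which always holds for y in D.  Some c therefore
   gives a value above p^n / (2^p p^p), and the l_p norms of the indicators
   multiply to at most p^n, so lambda >= 1/(2^p p^p).  Hence a small lambda
   forces |D| >= m^r >= (n/(2r))^r. *)

Section FiniteDifference.
Variables G M : zmodType.

Fixpoint fdiff (hs : seq G) (f : G -> M) (y : G) : M :=
  if hs is h :: hs' then fdiff hs' f (y + h) - fdiff hs' f y else f y.

Fixpoint cube (hs : seq G) : seq G :=
  if hs is h :: hs' then cube hs' ++ [seq w + h | w <- cube hs'] else [:: 0].

Lemma size_cube hs : size (cube hs) = (2 ^ size hs)%N.
Proof. by elim: hs => //= h hs IH; rewrite size_cat size_map IH expnS mul2n addnn. Qed.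

Lemma fdiff_eq0 hs f y : {in cube hs, forall w, f (y + w) = 0} -> fdiff hs f y = 0.
Proof.
elim: hs y => [|h hs IH] y /= f0; first by rewrite -[y]addr0 f0 ?mem_seq1.
rewrite !IH ?subrr // => w wC; first by apply: f0; rewrite mem_cat wC.
by rewrite -addrA [h + w]addrC f0 // mem_cat (map_f (+%R^~ h)) ?orbT.
Qed.

Lemma fdiff_sum (I : finType) hs (g : I -> G -> M) y :
  fdiff hs (fun z => \sum_i g i z) y = \sum_i fdiff hs (g i) y.
Proof. by elim: hs y => [|h hs IH] y //=; rewrite !IH -sumrB. Qed.

End FiniteDifference.

Lemma fdiff_mull (G : zmodType) (R : pzRingType) hs (a : R) (f : G -> R) y :
  fdiff hs (fun z => a * f z) y = a * fdiff hs f y.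
Proof. by elim: hs y => [|h hs IH] y //=; rewrite !IH mulrBr. Qed.

(* Each translate [y + cube hs] meets the support of [f], since [f] cannot
   vanish on it; double counting the pairs (y, w) gives the bound. *)
Lemma card_le_cube_support (G : finZmodType) (M : zmodType) hs (f : G -> M) :
  (forall y, fdiff hs f y != 0) -> (#|G| <= 2 ^ size hs * #|[set z | f z != 0%R]|)%N.
Proof.
move=> fdiff_neq0.
have meets (y : G) : (0 < \sum_(w <- cube hs) (f (y + w)%R != 0%R))%N.
  rewrite lt0n; apply: contra (fdiff_neq0 y); rewrite sum_nat_seq_eq0 => /allP f0.
  by apply/eqP/fdiff_eq0 => w /f0; rewrite eqb0 negbK => /eqP.
have := leq_sum (index_enum G) (fun y (_ : true) => meets y).
rewrite sum1_card exchange_big /= => /leq_trans; apply.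
rewrite (eq_bigr (fun=> #|[set z | f z != 0]|)) => [|w _].
  by rewrite big_const_seq count_predT iter_addn_0 size_cube mulnC.
rewrite -sum1dep_card (reindex_inj (addIr (- w))) [RHS]big_mkcond /=.
by apply: eq_bigr => z _; rewrite subrK; case: (f z != 0).
Qed.

Section Monomial.
Variables (F : comNzRingType) (n : nat).

Definition monomial (A : seq 'I_n) (v : 'rV[F]_n) : F := \prod_(a <- A) v 0 a.

Lemma fdiff_monomial (A L : seq 'I_n) y : uniq A -> uniq L ->
  fdiff [seq delta_mx 0 s | s <- L] (monomial A) y =
  if all (mem A) L then \prod_(a <- A | a \notin L) y 0 a else 0.
Proof.
move=> uA; elim: L y => [|s L IH] y /= => [_|/andP[sL uL]].
  by apply: eq_bigl => a.
rewrite !IH //; case: (all _ L); last by rewrite andbF subrr.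
have shift_s a : a != s -> (y + delta_mx 0 s) 0 a = y 0 a.
  by move=> /negbTE neq_as; rewrite !mxE neq_as andbF addr0.
rewrite andbT; case As: (s \in A); last first.
  apply/eqP; rewrite subr_eq0; apply/eqP.
  rewrite big_seq_cond [RHS]big_seq_cond; apply: eq_bigr => a /andP[aA _].
  by rewrite shift_s //; apply: contraTneq aA => ->; rewrite As.
rewrite -!(big_filter _ (fun a => a \notin L)).
have sA' : s \in [seq a <- A | a \notin L] by rewrite mem_filter sL.
rewrite !(bigD1_seq s sA' (filter_uniq _ uA)) /=.
rewrite [X in _ * X - _](eq_bigr (fun a => y 0 a)) => [|a]; last exact: shift_s.
rewrite -mulrBl !mxE !eqxx addrAC subrr add0r mul1r big_filter_cond.
by apply: eq_bigl => a; rewrite in_cons negb_or andbC.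
Qed.

End Monomial.

Lemma natr_card (R : finNzRingType) : #|R|%:R = 0 :> R.
Proof.
have : \sum_(x : R) x = \sum_(x : R) (x + 1) by rewrite (reindex_inj (addIr 1)).
by rewrite big_split sumr_const /= -[LHS]addr0 => /addrI.
Qed.

Section PowerSums.
Variable F : finFieldType.

Lemma sum_expr_eq0 k : (k < #|F|.-1)%N -> \sum_(x : F) x ^+ k = 0.
Proof.
case: k => [_|k lt_k]; first by under eq_bigr do rewrite expr0; rewrite sumr_const natr_card.
have [a a0 ak] : exists2 a : F, a != 0 & a ^+ k.+1 != 1.
  apply/exists_inP; apply: contraLR lt_k => /exists_inPn all_roots.
  rewrite -(cardC1 (0 : F)) cardE -leqNgt -ltnS -(size_XnsubC (1 : F) (ltn0Sn k)).
  apply: max_poly_roots; rewrite ?enum_uniq // -?size_poly_eq0 ?size_XnsubC //.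
  apply/allP => x; rewrite mem_enum => /all_roots.
  by rewrite negbK rootE !hornerE => /eqP ->; rewrite subrr.
set S := \sum_x _; have : S = a ^+ k.+1 * S.
  by rewrite /S mulr_sumr (reindex_inj (mulfI a0)); apply: eq_bigr => x _; rewrite exprMn.
by move/eqP; rewrite -subr_eq0 -{1}[S]mul1r -mulrBl mulf_eq0 subr_eq0 eq_sym (negbTE ak) => /eqP.
Qed.

Lemma sum_expr_card_pred : \sum_(x : F) x ^+ #|F|.-1 = -1.
Proof.
have F_gt1 := finNzRing_gt1 F.
have predF_gt0 : (0 < #|F|.-1)%N by rewrite -ltnS prednK // ltnW.
rewrite (bigD1 0) //= expr0n eqn0Ngt predF_gt0 add0r.
rewrite (eq_bigr (fun=> 1)) => [|x x0]; last first.
  by apply: (mulfI x0); rewrite -exprS (ltn_predK F_gt1) expf_card mulr1.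
rewrite sumr_const cardC1; apply: (addIr 1).
by rewrite -mulrSr (ltn_predK F_gt1) natr_card addNr.
Qed.

Lemma sum_prod_affine r (a b : 'I_r -> F) : r = #|F|.-1 ->
  \sum_(x : F) \prod_(i < r) (a i + x * b i) = - \prod_i b i.
Proof.
move=> def_r.
have expand x : \prod_i (a i + x * b i) =
    \sum_(J : {set 'I_r}) x ^+ #|J| * (\prod_(i in J) b i * \prod_(i in ~: J) a i).
  rewrite (eq_bigr (fun i => x * b i + a i)) => [|i _]; last by rewrite addrC.
  rewrite bigA_distr; apply: eq_bigr => J _.
  rewrite (bigID (mem J)) /= mulrA; congr (_ * _).
    by rewrite (eq_bigr (fun i => x * b i)) => [|i ->]; rewrite ?big_split /= ?prodr_const.
  by apply: eq_big => [i|i /negbTE ->]; rewrite ?inE.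
rewrite (eq_bigr _ (fun x _ => expand x)).
rewrite exchange_big /= (bigD1 [set: 'I_r]) //= [X in _ + X]big1 => [|J JT]; last first.
  rewrite -mulr_suml sum_expr_eq0 ?mul0r // -def_r -[r in (_ < r)%N]card_ord.
  by rewrite -cardsT proper_card // properT.
have sum_r : \sum_(x : F) x ^+ r = -1 by rewrite def_r sum_expr_card_pred.
rewrite -mulr_suml cardsT card_ord sum_r mulN1r finset.setCT big_set0.
by rewrite mulr1 addr0; congr (- _); apply: eq_bigl => i; rewrite inE.
Qed.

End PowerSums.

Lemma exists_nontrivial_solution (F : finFieldType) (K T : finType) (S : {set T})
    (g : K -> T -> F) : (#|S| < #|K|)%N ->
  exists2 c : {ffun K -> F}, c != 0 & {in S, forall y, \sum_k c k * g k y = 0}.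
Proof.
move=> S_lt_K.
pose eval (c : {ffun K -> F}) := [ffun y : {y | y \in S} => \sum_k c k * g k (val y)].
have /injectivePn[c1 [c2 c12 eval12]] : ~~ injectiveb eval.
  apply: contraL S_lt_K => /injectiveP/leq_card.
  by rewrite !card_ffun card_sig leq_exp2l ?finNzRing_gt1 // -leqNgt.
exists (c1 - c2); first by rewrite subr_eq0.
move=> y yS; have /ffunP/(_ (exist _ y yS)) := eval12; rewrite !ffunE /= => e.
by under eq_bigr do rewrite !ffunE mulrBl; rewrite sumrB e subrr.
Qed.

Section BlockPolynomial.
Variables p n : nat.
Hypothesis p_pr : prime p.
Local Notation F := 'F_p.
Local Notation r := p.-1.
Local Notation m := (n %/ p.-1)%N.
Local Notation K := {ffun 'I_r -> 'I_m}.

Lemma sum_ord_Fp (M : nmodType) (g : F -> M) :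
  \sum_(j < p) g j%:R = \sum_(z : F) g z.
Proof.
have natr_inj : injective (fun j : 'I_p => (j%:R : F)).
  by move=> j j' /(congr1 val); rewrite /= !(val_Fp_nat p_pr) !modn_small // => /val_inj.
have := inj_card_bij natr_inj; rewrite card_Fp // card_ord => /(_ (leqnn p)) natr_bij.
by rewrite (reindex _ (onW_bij _ natr_bij)).
Qed.

Fact block_index_subproof (i : 'I_r) (j : 'I_m) : (i * m + j < n)%N.
Proof.
apply: leq_trans (leq_divM n r); rewrite mulnC.
apply: leq_trans (leq_mul (leqnn m) (ltn_ord i)).
by rewrite mulnS [(m + _)%N]addnC ltn_add2l.
Qed.

Definition block_index i j : 'I_n := Ordinal (block_index_subproof i j).

Lemma block_index_inj i j i' j' : block_index i j = block_index i' j' -> i = i' /\ j = j'.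
Proof.
move/(congr1 val) => /= eq_ij; have m_gt0 : (0 < m)%N := leq_ltn_trans (leq0n j) (ltn_ord j).
have eq_i : i = i' :> nat.
  by have := congr1 (divn^~ m) eq_ij; rewrite /= !divnMDl // !divn_small // !addn0.
by split; apply: val_inj; move: eq_ij; rewrite /= eq_i => /addnI.
Qed.

Definition block_vars (k : K) := [seq block_index i (k i) | i <- enum 'I_r].

Lemma block_vars_uniq k : uniq (block_vars k).
Proof. by rewrite map_inj_uniq ?enum_uniq // => i i' /block_index_inj[]. Qed.

Lemma block_vars_subset_eq k k' : all (mem (block_vars k)) (block_vars k') -> k = k'.
Proof.
move/allP => sub_k'k; apply/ffunP => i.
have /sub_k'k/mapP[i' _ /block_index_inj[<- //]] : block_index i (k' i) \in block_vars k'.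
  by apply: (map_f (fun i => block_index i (k' i))); rewrite mem_enum.
Qed.

Lemma monomial_block_vars k (v : 'rV[F]_n) :
  monomial (block_vars k) v = \prod_i v 0 (block_index i (k i)).
Proof. by rewrite /monomial big_map big_enum. Qed.

Definition block_poly (c : {ffun K -> F}) (v : 'rV[F]_n) : F :=
  \sum_k c k * monomial (block_vars k) v.

(* Along a progression each monomial is a product of [p - 1] affine functions of
   the step index, so [sum_prod_affine] evaluates its sum. *)
Lemma block_poly_progression c (x y : 'rV[F]_n) :
  \sum_(j < p) block_poly c (x + y *+ j) = - block_poly c y.
Proof.
rewrite exchange_big -sumrN; apply: eq_bigr => k _.
rewrite -mulr_sumr -mulrN monomial_block_vars; congr (_ * _).
rewrite (eq_bigr _ (fun j _ => monomial_block_vars k _)).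
have r_card : r = #|F|.-1 by rewrite card_Fp.
rewrite -(sum_prod_affine (fun i => x 0 (block_index i (k i)))
                          (fun i => y 0 (block_index i (k i))) r_card).
rewrite -sum_ord_Fp; apply: eq_bigr => j _; apply: eq_bigr => i _.
by rewrite !mxE mulmxnE mulr_natl.
Qed.

Lemma fdiff_block_poly c k0 y :
  fdiff [seq delta_mx 0 a | a <- block_vars k0] (block_poly c) y = c k0.
Proof.
rewrite fdiff_sum (bigD1 k0) //= big1 => [|k k_k0]; rewrite fdiff_mull.
  rewrite fdiff_monomial ?block_vars_uniq // (introT allP (fun=> id)).
  by rewrite big_seq_cond big_pred0 ?mulr1 ?addr0 // => a; rewrite andbN.
rewrite fdiff_monomial ?block_vars_uniq //.
case: ifP => [/block_vars_subset_eq k0_k|_]; last by rewrite mulr0.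
by rewrite k0_k eqxx in k_k0.
Qed.

Lemma block_poly_support (c : {ffun K -> F}) k0 : c k0 != 0 ->
  (#|'rV[F]_n| <= 2 ^ r * #|[set v | block_poly c v != 0%R]|)%N.
Proof.
move=> ck0.
have := @card_le_cube_support _ _ [seq delta_mx 0 a | a <- block_vars k0] (block_poly c).
by rewrite size_map size_map size_enum_ord; apply=> y; rewrite fdiff_block_poly.
Qed.

End BlockPolynomial.

Lemma sum_ffun_delta (I T : finType) (R : comPzSemiRingType) (w : I -> T)
    (G : {ffun I -> T} -> R) :
  \sum_(u : {ffun I -> T}) (\prod_i ((u i == w i) : nat)%:R) * G u = G (finfun w).
Proof.
rewrite (bigD1 (finfun w)) //= big1 ?mul1r => [|i _]; last by rewrite ffunE eqxx.
rewrite big1 ?addr0 // => u /eqP neq_uw.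
have [i /eqP neq_i] : exists i, u i != w i.
  by apply/existsP/negP => /forallP eq_uw; apply/neq_uw/ffunP => i; rewrite ffunE; apply/eqP.
by rewrite (bigD1 i) //= (introF eqP neq_i) !mul0r.
Qed.

Lemma sum_indicator_card (R : pzSemiRingType) (T : finType) (P : pred T) :
  \sum_x (P x)%:R = #|[set x | P x]|%:R :> R.
Proof. by rewrite -sum1dep_card natr_sum [RHS]big_mkcond; apply: eq_bigr => x _; case: (P x). Qed.

Lemma exists_gt_of_sum (R : realDomainType) (I : finType) (P : pred I) (f : I -> R) t :
  0 <= t -> #|I|%:R * t < \sum_(i | P i) f i -> exists2 i, P i & t < f i.
Proof.
move=> t_ge0 lt_sum; apply/exists_inP; apply: contraLR lt_sum => /exists_inPn le_t.
have le_sum : \sum_(i | P i) f i <= \sum_(i | P i) t.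
  by apply: ler_sum => i /le_t; rewrite leNgt.
by rewrite -leNgt (le_trans le_sum) // sumr_const mulr_natl ler_wpMn2l ?max_card.
Qed.

Section LpNorm.
Variables (R : realType) (p n : nat).
Local Notation V := 'rV['F_p]_n.

Lemma lr_norm_gt0 (r : R) (x : {ffun V -> R}) : x != 0 -> 0 < lr_norm r x.
Proof.
move=> x_neq0; apply: powR_gt0.
have [v xv_neq0] : exists v, x v != 0.
  apply/existsP; apply: contraNT x_neq0 => /existsPn x0.
  by apply/eqP/ffunP => v; rewrite ffunE; move: (x0 v); rewrite negbK => /eqP.
by rewrite (bigD1 v) //= ltr_pwDl ?powR_gt0 ?normr_gt0 // sumr_ge0.
Qed.

Lemma lr_norm_le_card (r : R) (x : {ffun V -> R}) : 0 < r ->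
  (forall v, `|x v| <= 1) -> lr_norm r x <= #|V|%:R `^ r^-1.
Proof.
move=> r_gt0 x_le1; apply: ge0_ler_powR; rewrite ?nnegrE ?invr_ge0 ?ler0n ?(ltW r_gt0) //.
  by apply: sumr_ge0 => v _; exact: powR_ge0.
have pow_le1 v : `|x v| `^ r <= 1.
  have -> : 1 = 1 `^ r :> R by rewrite powR1.
  by apply: ge0_ler_powR; rewrite ?nnegrE ?normr_ge0 ?ler01 ?x_le1 ?(ltW r_gt0).
by apply: le_trans (ler_sum _ (fun v _ => pow_le1 v)) _; rewrite sumr_const.
Qed.

Lemma prod_lr_norm_le_card (xs : 'I_p -> {ffun V -> R}) : (0 < p)%N ->
  (forall i v, `|xs i v| <= 1) -> \prod_i lr_norm p%:R (xs i) <= #|V|%:R.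
Proof.
move=> p_gt0 xs_le1; have p_neq0 : (p%:R : R) != 0 by rewrite pnatr_eq0 -lt0n.
have norm_bounds i : 0 <= lr_norm p%:R (xs i) <= #|V|%:R `^ p%:R^-1.
  by rewrite powR_ge0 lr_norm_le_card ?ltr0n.
apply: le_trans (ler_prod _ (fun i _ => norm_bounds i)) _.
rewrite prodr_const card_ord -powR_mulrn ?powR_ge0 // -powRrM mulVf //.
by rewrite powRr1 ?ler0n.
Qed.

Lemma lambdaK_ge (K H : {ffun V -> nat}) (xs : 'I_p -> {ffun V -> R}) :
  (forall i, xs i != 0) ->
  (((AL H xs - AL K xs) / \prod_i lr_norm p%:R (xs i))%:E <= lambdaK R K H)%E.
Proof. by move=> xs_neq0; apply: ereal_sup_ubound; exists xs. Qed.

End LpNorm.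

Section AdjacencyForm.
Variables (R : realType) (p n : nat).
Hypothesis p_pr : prime p.
Local Notation F := 'F_p.
Local Notation V := 'rV[F]_n.

Lemma AL_progressionE (D : {ffun V -> nat}) (xs : 'I_p -> {ffun V -> R}) :
  AL D xs = ((p`!)%:R * (ms_card D)%:R)^-1 *
    \sum_y (D y)%:R * \sum_x \sum_(s : 'S_p) \prod_i xs i (x + y *+ s i).
Proof.
set c := ((p`!)%:R * (ms_card D)%:R).
transitivity (c^-1 * \sum_u (edge_mult D u)%:R * \prod_i xs i (u i)).
  by rewrite /AL mulr_sumr; apply: eq_bigr => u _; rewrite mulrAC mulrC.
congr (_ * _); under eq_bigr do rewrite natr_sum mulr_suml.
rewrite exchange_big; apply: eq_bigr => y _ /=.
under eq_bigr do rewrite natrM -mulrA natr_sum mulr_suml.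
rewrite -mulr_sumr exchange_big; congr (_ * _); apply: eq_bigr => x _ /=.
under eq_bigr do rewrite natr_sum mulr_suml.
rewrite exchange_big; apply: eq_bigr => s _ /=.
under eq_bigr do rewrite natr_prod.
by rewrite sum_ffun_delta; apply: eq_bigr => i _; rewrite ffunE.
Qed.

Lemma AL_eq0 (D : {ffun V -> nat}) (xs : 'I_p -> {ffun V -> R}) i :
  xs i = 0 -> AL D xs = 0.
Proof.
by move=> xs_i0; rewrite /AL big1 // => u _; rewrite (bigD1 i) //= xs_i0 ffunE !mul0r mulr0.
Qed.

Definition level_ind (Q : V -> F) (a : F) : {ffun V -> R} := [ffun v => (Q v == a)%:R].

Lemma sum_prod_level_ind (Q : V -> F) (w : 'I_p -> V) :
  \sum_(c : {ffun 'I_p -> F} | \sum_i c i == 0) \prod_i level_ind Q (c i) (w i) =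
  (\sum_i Q (w i) == 0)%:R.
Proof.
rewrite big_mkcond /=.
rewrite (eq_bigr (fun c : {ffun 'I_p -> F} =>
  (\prod_i ((c i == Q (w i)) : nat)%:R) * (\sum_i c i == 0)%:R)).
  by rewrite sum_ffun_delta; congr (_ == _)%:R; apply: eq_bigr => i _; rewrite ffunE.
move=> c _; case: ifP => _; rewrite ?mulr1 ?mulr0 //.
by apply: eq_bigr => i _; rewrite ffunE eq_sym.
Qed.

Lemma sum_AL_level_ind (D : {ffun V -> nat}) (Q : V -> F) :
    (forall x y : V, \sum_(j < p) Q (x + y *+ j) = - Q y) ->
  \sum_(c : {ffun 'I_p -> F} | \sum_i c i == 0) AL D (fun i => level_ind Q (c i)) =
  #|V|%:R * (\sum_y (D y)%:R * (Q y == 0)%:R) / (ms_card D)%:R.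
Proof.
move=> Q_progression.
under eq_bigr do rewrite AL_progressionE.
rewrite -mulr_sumr exchange_big /=.
have fact_neq0 : (p`!)%:R != 0 :> R by rewrite pnatr_eq0 -lt0n fact_gt0.
transitivity (((p`!)%:R * (ms_card D)%:R : R)^-1 *
    \sum_y (D y)%:R * (#|V|%:R * (p`!)%:R * (Q y == 0)%:R)).
  congr (_ * _); apply: eq_bigr => y _; rewrite -mulr_sumr; congr (_ * _).
  rewrite exchange_big.
  transitivity (\sum_(x : V) ((p`!)%:R * (Q y == 0)%:R : R)).
    apply: eq_bigr => x _; rewrite exchange_big /=.
    transitivity (\sum_(s : 'S_p) ((Q y == 0)%:R : R)).
      apply: eq_bigr => s _; rewrite sum_prod_level_ind.
      have -> : \sum_i Q (x + y *+ s i) = \sum_(i < p) Q (x + y *+ i).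
        by rewrite [RHS](reindex_perm s).
      by rewrite Q_progression oppr_eq0.
    by rewrite sumr_const card_Sn mulr_natl.
  by rewrite sumr_const -mulrA [RHS]mulr_natl.
rewrite [X in _ * X](eq_bigr (fun y => #|V|%:R * (p`!)%:R * ((D y)%:R * (Q y == 0)%:R))).
  rewrite -mulr_sumr invfM [_ * p`!%:R]mulrC -(mulrA p`!%:R) mulrACA mulVf //.
  by rewrite mul1r mulrC.
by move=> y _; rewrite mulrCA.
Qed.

Lemma sum_AL_diff_level_ind (D : {ffun V -> nat}) (Q : V -> F) : (0 < ms_card D)%N ->
    (forall x y : V, \sum_(j < p) Q (x + y *+ j) = - Q y) ->
    (forall y, (0 < D y)%N -> Q y = 0) ->
  \sum_(c : {ffun 'I_p -> F} | \sum_i c i == 0)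
     (AL D (fun i => level_ind Q (c i)) - AL (full_ms p n) (fun i => level_ind Q (c i))) =
  #|[set y | Q y != 0]|%:R.
Proof.
move=> D_gt0 Q_progression Q_suppD; rewrite sumrB !sum_AL_level_ind //.
have -> : \sum_y (D y)%:R * (Q y == 0)%:R = (ms_card D)%:R :> R.
  rewrite /ms_card natr_sum; apply: eq_bigr => y _.
  by case: (posnP (D y)) => [->|/Q_suppD ->]; rewrite ?mul0r ?eqxx ?mulr1.
have -> : ms_card (full_ms p n) = #|V|.
  by rewrite /ms_card (eq_bigr (fun=> 1%N)) ?sum1_card // => y _; rewrite ffunE.
have -> : \sum_y ((full_ms p n) y)%:R * (Q y == 0)%:R = \sum_y (Q y == 0)%:R :> R.
  by apply: eq_bigr => y _; rewrite ffunE mul1r.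
have V_neq0 : #|V|%:R != 0 :> R by rewrite pnatr_eq0 -lt0n; apply/card_gt0P; exists 0.
rewrite !mulfK ?pnatr_eq0 -?lt0n // mulrAC mulfV // mul1r sum_indicator_card.
apply/eqP; rewrite subr_eq -natrD eqr_nat -(cardsC [set y | Q y == 0]) addnC.
by rewrite eqn_add2r; apply/eqP/eq_card => y; rewrite !inE.
Qed.

Lemma lambdaK_full_ge (D : {ffun V -> nat}) (Q : V -> F) : (0 < ms_card D)%N ->
    (forall x y : V, \sum_(j < p) Q (x + y *+ j) = - Q y) ->
    (forall y, (0 < D y)%N -> Q y = 0) ->
    (#|V| <= 2 ^ p.-1 * #|[set y | Q y != 0%R]|)%N ->
  (((2 ^ p * p ^ p)%:R^-1 : R)%:E <= lambdaK R (full_ms p n) D)%E.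
Proof.
move=> D_gt0 Q_progression Q_suppD Q_dense.
set N : R := #|V|%:R; set S : R := #|[set y | Q y != 0]|%:R.
set c0 : R := (2 ^ p * p ^ p)%:R; pose xs (c : {ffun 'I_p -> F}) i := level_ind Q (c i).
have N_gt0 : 0 < N by rewrite ltr0n; apply/card_gt0P; exists 0.
have c0_gt0 : 0 < c0 by rewrite ltr0n muln_gt0 !expn_gt0 (prime_gt0 p_pr).
have [c _ diff_gt] : exists2 c : {ffun 'I_p -> F}, \sum_i c i == 0 &
    N / c0 < AL D (xs c) - AL (full_ms p n) (xs c).
  (* the tests sum to S >= N / 2^(p-1), and there are at most p^p of them *)
  apply: exists_gt_of_sum; first by rewrite divr_ge0 ?ltW.
  rewrite sum_AL_diff_level_ind // card_ffun card_Fp // card_ord -/S.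
  have P_gt0 : 0 < (p ^ p)%:R :> R by rewrite ltr0n expn_gt0 (prime_gt0 p_pr).
  have /(ler_wpM2l (ltW P_gt0)) dense : N <= (2 ^ p.-1)%:R * S by rewrite -natrM ler_nat.
  have PN_gt0 := mulr_gt0 P_gt0 N_gt0.
  rewrite mulrA ltr_pdivrMr // /c0 -[p in (2 ^ p)%N](prednK (prime_gt0 p_pr)) expnS !natrM.
  lra.
have xs_neq0 i : xs c i != 0.
  apply: contraTneq diff_gt => xs0.
  by rewrite !(AL_eq0 _ xs0) subrr -leNgt divr_ge0 ?ltW.
have prod_gt0 : 0 < \prod_i lr_norm p%:R (xs c i).
  by apply: prodr_gt0 => i _; exact: lr_norm_gt0.
have prod_le : \prod_i lr_norm p%:R (xs c i) <= N.
  apply: prod_lr_norm_le_card => [|i v]; first exact: prime_gt0.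
  by rewrite ffunE; case: (_ == _); rewrite ?normr1 ?normr0 ?ler01.
apply: le_trans (lambdaK_ge _ _ xs_neq0); rewrite lee_fin ler_pdivlMr //.
by rewrite (le_trans _ (ltW diff_gt)) // [X in _ <= X]mulrC ler_wpM2l // invr_ge0 ltW.
Qed.

End AdjacencyForm.

Lemma leq_double_mul_divn d n : (0 < d <= n)%N -> (n <= 2 * d * (n %/ d))%N.
Proof.
case/andP=> d_gt0 d_le_n; have q_gt0 : (0 < n %/ d)%N by rewrite divn_gt0.
have le_dq := leq_pmull d q_gt0; have lt_rd := ltn_pmod n d_gt0.
rewrite {1}(divn_eq n d) -mulnA mul2n -addnn [(d * _)%N]mulnC.
by move: (n %/ d)%N (n %% d)%N le_dq lt_rd => q r; lia.
Qed.

Lemma card_support_le_ms_card p n (D : {ffun 'rV['F_p]_n -> nat}) :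
  (#|[set y | 0 < D y]| <= ms_card D)%N.
Proof.
rewrite -sum1dep_card /ms_card [X in (_ <= X)%N](bigID (fun y => 0 < D y)%N) /=.
by apply: leq_trans _ (leq_addr _ _); apply: leq_sum => y.
Qed.

Lemma support_card_ge (R : realType) p n (D : {ffun 'rV['F_p]_n -> nat}) :
    prime p -> (0 < ms_card D)%N ->
    (lambdaK R (full_ms p n) D < ((2 ^ p * p ^ p)%:R^-1)%:E)%E ->
  ((n %/ p.-1) ^ p.-1 <= #|[set y | 0 < D y]|)%N.
Proof.
move=> p_pr D_gt0 lambda_lt; rewrite leqNgt; apply/negP => small_supp.
have [|c c_neq0 c_vanish] := exists_nontrivial_solution
  (fun k => monomial (block_vars (p:=p) (n:=n) k)) (S := [set y | (0 < D y)%N]).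
  by rewrite card_ffun !card_ord.
have [k0 ck0] : exists k0, c k0 != 0.
  apply/existsP; apply: contraNT c_neq0 => /existsPn c0.
  by apply/eqP/ffunP => k; rewrite ffunE; apply/eqP/negPn.
have Q_suppD y : (0 < D y)%N -> block_poly c y = 0 by move=> Dy; apply: c_vanish; rewrite inE.
have := lambdaK_full_ge R p_pr D_gt0 (block_poly_progression p_pr c) Q_suppD
  (block_poly_support ck0).
by rewrite leNgt lambda_lt.
Qed.

Theorem theorem2p1 (R : realType) (p : nat) : prime p ->
  exists eps0 delta : R, 0 < eps0 /\ 0 < delta /\
  forall (n : nat), (p ^ 2 <= n)%N ->
  forall eps : R, eps < eps0 ->
  forall D : {ffun 'rV['F_p]_n -> nat}, (0 < ms_card D)%N ->
    (@lambdaK R p n (full_ms p n) D <= eps%:E)%E ->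
    delta * n%:R ^+ (p - 1) <= (ms_card D)%:R.
Proof.
move=> p_pr; have p_gt1 := prime_gt1 p_pr; set r := p.-1.
have r_gt0 : (0 < r)%N by rewrite -ltnS prednK // ltnW.
exists (2 ^ p * p ^ p)%:R^-1, ((2 * r) ^ r)%:R^-1.
split; first by rewrite invr_gt0 ltr0n muln_gt0 !expn_gt0 (prime_gt0 p_pr).
split; first by rewrite invr_gt0 ltr0n expn_gt0 muln_gt0 r_gt0.
move=> n p2_le_n eps eps_lt D D_gt0 lambda_le.
have supp_ge := support_card_ge p_pr D_gt0 (le_lt_trans lambda_le (lte_tofin eps_lt)).
have r_le_n : (r <= n)%N.
  by rewrite (leq_trans (leq_pred p)) // (leq_trans _ p2_le_n) // leq_pmulr ?prime_gt0.
rewrite subn1 -natrX mulrC ler_pdivrMr ?ltr0n ?expn_gt0 ?muln_gt0 ?r_gt0 // -natrM ler_nat.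
rewrite (leq_trans (_ : _ <= (2 * r * (n %/ r)) ^ r)%N)
  ?leq_exp2r ?leq_double_mul_divn ?r_gt0 ?r_le_n //.
by rewrite expnMn mulnC leq_mul2r (leq_trans supp_ge) ?card_support_le_ms_card ?orbT.
Qed.
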